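(* For any hypothesis class $\mathcal{H}\subseteq\{0,1\}^{\mathcal{X}}$ and time horizon $T$, $$\inf_{\mathcal{A}}\operatorname{M}_{\mathcal{A}}(T,\mathcal{H}) \ge \frac{1}{8}\sup_{w\in\mathbb{N}}\sqrt{\min\{w,\operatorname{L}(\mathcal{H}),T\}\,\min\{\operatorname{AL}_w(\mathcal{H}),T\}},$$ where the infimum is over all (possibly randomized) online learners operating under apple tasting feedback.
   Context: Online binary classification: over rounds $t=1,\dots,T$, an adversary picks $(x_t,y_t)\in\mathcal{X}\times\{0,1\}$ and reveals $x_t$; the learner $\mathcal{A}$ (possibly randomized) outputs $\hat y_t=\mathcal{A}(x_t)\in\{0,1\}$ based on the history; under apple tasting feedback the learner observes $y_t$ only if $\hat y_t=1$. $\operatorname{M}_{\mathcal{A}}(T,\mathcal{H}) := \sup_{h\in\mathcal{H}}\sup_{x_1,\dots,x_T}\mathbb{E}\bigl[\sum_{t=1}^T \mathbb{1}\{\mathcal{A}(x_t)\neq h(x_t)\}\bigr]$ (labels $y_t=h(x_t)$, expectation over the learner's randomness). AL tree of width $w\in\mathbb{N}=\{1,2,\dots\}$ and depth $d$: a binary string $u$ is an internal node if $|u|<d$ and $u$ has fewer than $w$ ones; the tree assigns $x_u\in\mathcal{X}$ to each internal node. A path is a binary string $\sigma$ whose proper prefixes are all internal nodes but which is not itself one. The tree is shattered by $\mathcal{H}$ if for every path $\sigma$ some $h\in\mathcal{H}$ satisfies $h(x_{(\sigma_1,\dots,\sigma_{i-1})})=\sigma_i$ for all $i\le|\sigma|$.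 When $w\ge d$ it is a complete binary (Littlestone) tree. $\operatorname{L}(\mathcal{H})$ is the largest $d$ such that a complete binary tree of depth $d$ is shattered ($\infty$ if unbounded). $\operatorname{AL}_w(\mathcal{H})$ is the largest $d$ such that an AL tree of width $w$ and depth $d$ is shattered ($\infty$ if unbounded, $0$ if none). *)

From HB Require Import structures.
From mathcomp Require Import all_boot all_order all_algebra.
From mathcomp Require Import boolp classical_sets reals.
Set Implicit Arguments. Unset Strict Implicit. Unset Printing Implicit Defensive.
Import Order.TTheory GRing.Theory Num.Theory.
Local Open Scope classical_set_scope.
Local Open Scope ring_scope.

(* One round of observed history: the instance x_t, the learner's prediction
   yhat_t, and the feedback (Some y_t if yhat_t = 1, None otherwise). *)
Definition round_obs (X : Type) := (X * bool * option bool)%type.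

(* A (possibly randomized) learner, as a behavioural strategy: given the
   observed history and the current instance x_t, it returns the probability
   of predicting 1. *)
Definition learner (X : Type) (R : realType) := seq (round_obs X) -> X -> R.

Definition valid_learner (X : Type) (R : realType) (A : learner X R) : Prop :=
  forall hist x, 0 <= A hist x <= 1.

Fixpoint exp_mistakes (X : Type) (R : realType) (A : learner X R)
    (h : X -> bool) (hist : seq (round_obs X)) (xs : seq X) : R :=
  match xs with
  | [::] => 0
  | x :: xs' =>
      let p := A hist x in
      p * ((h x != true)%:R
           + exp_mistakes A h (rcons hist (x, true, Some (h x))) xs')
      + (1 - p) * ((h x != false)%:R
           + exp_mistakes A h (rcons hist (x, false, None)) xs')
  end.

Definition Mistakes (X : Type) (R : realType) (A : learner X R) (T : nat)
    (H : set (X -> bool)) : R :=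
  sup [set r | exists h xs, H h /\ size xs = T /\ r = exp_mistakes A h [::] xs].

(* binary string u is an internal node of an AL tree of width w, depth d *)
Definition internal (w d : nat) (u : seq bool) : bool :=
  (size u < d)%N && (count id u < w)%N.

Definition is_path (w d : nat) (sigma : seq bool) : Prop :=
  (forall i, (i < size sigma)%N -> internal w d (take i sigma))
  /\ ~~ internal w d sigma.

(* a tree assigns an instance to every node (only internal ones matter) *)
Definition shattered (X : Type) (H : set (X -> bool)) (w d : nat)
    (tree : seq bool -> X) : Prop :=
  forall sigma, is_path w d sigma ->
    exists h, H h /\
      forall i, (i < size sigma)%N -> h (tree (take i sigma)) = nth false sigma i.

(* "largest d such that P d": None stands for infinity (unbounded),
   Some 0 if there is no such d. *)
Definition largest (P : nat -> Prop) : option nat :=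
  if `[< exists B, forall d, P d -> (d <= B)%N >]
  then Some (xget 0%N [set d | P d /\ forall d', P d' -> (d' <= d)%N])
  else None.

(* Littlestone dimension: complete binary trees are AL trees of width w >= d;
   we take w = d. *)
Definition Ldim (X : Type) (H : set (X -> bool)) : option nat :=
  largest (fun d => exists tree, shattered H d d tree).

Definition ALdim (X : Type) (H : set (X -> bool)) (w : nat) : option nat :=
  largest (fun d => exists tree, shattered H w d tree).

Definition ominn (n : nat) (o : option nat) : nat :=
  if o is Some d then minn n d else n.

(* Fix [w] and let [a = min (w, T, L H)] and [b = min (T, AL_w H)].  On a
   shattered tree of width [k] and depth [D], a randomized adversary walks down
   from the root: at node [u] it draws a label, 1 with probability
   [p = k / (2 D)], and presents [x_u] [m] times with that label.  Until the
   learner predicts 1 on the block it loses [p] per round; once it does, it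
   loses [1 - p] on a 0 label.  As [(m + 1) p <= 1], every block costs the
   learner [m p] in expectation, so the potential
   [m / 2 * (p * remaining depth - number of ones)] bounds its expected
   mistakes from below; the walk stops early only at [k] ones, where the
   potential is nonpositive.  This gives [m k / 4] expected mistakes, hence a
   deterministic labelled sequence that forces as many.  When [b <= 4 a] take
   [m = 1] and [k = D = a] on a Littlestone tree; otherwise take [k = a],
   [m = floor (sqrt (b / a))] and [D = b / m] on an AL tree of width [w].  In
   both cases [sqrt (a b) <= 2 m k]. *)

From HB Require Import structures.
From mathcomp Require Import all_boot all_order all_algebra.
From mathcomp Require Import boolp classical_sets reals.
From mathcomp Require Import ring lra zify.
Import Order.TTheory GRing.Theory Num.Theory.
Local Open Scope classical_set_scope.
Local Open Scope ring_scope.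
Set Implicit Arguments. Unset Strict Implicit. Unset Printing Implicit Defensive.

Lemma convex_ge (R : realDomainType) (t a b c : R) :
  0 <= t <= 1 -> c <= a -> c <= b -> c <= t * a + (1 - t) * b.
Proof.
move=> /andP[t0 t1] ca cb.
have := ler_wpM2l t0 ca; have := @ler_wpM2l _ (1 - t) _ _ _ cb.
rewrite subr_ge0 => /(_ t1); lra.
Qed.

Lemma convex_le (R : realDomainType) (t a b c : R) :
  0 <= t <= 1 -> a <= c -> b <= c -> t * a + (1 - t) * b <= c.
Proof.
move=> /andP[t0 t1] ac bc.
have := ler_wpM2l t0 ac; have := @ler_wpM2l _ (1 - t) _ _ _ bc.
rewrite subr_ge0 => /(_ t1); lra.
Qed.

Lemma natr_bool01 (R : numDomainType) (b : bool) : 0 <= (b%:R : R) <= 1.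
Proof. by case: b; rewrite ?lexx ?ler01. Qed.

Lemma sqrt_natr_le (R : rcfType) (x y : nat) : (x <= y ^ 2)%N -> Num.sqrt (x%:R : R) <= y%:R.
Proof.
move=> xy; apply: le_trans (ler_wsqrtr (_ : x%:R <= y%:R ^+ 2)) _.
  by rewrite -natrX ler_nat.
by rewrite sqrtr_sqr normr_nat.
Qed.

Lemma mul_sqr_bracket a b :
  (0 < a <= b)%N -> exists2 m, (0 < m)%N & (a * m ^ 2 <= b < a * m.+1 ^ 2)%N.
Proof.
move=> /andP[a0 ab].
have ex : exists m, (a * m ^ 2 <= b)%N by exists 1%N; rewrite exp1n muln1.
have ub m : (a * m ^ 2 <= b)%N -> (m <= b)%N by nia.
case: (ex_maxnP ex ub) => m am maxm; exists m.
  by have := maxm 1%N; rewrite exp1n muln1 => /(_ ab).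
by rewrite am ltnNge; apply/negP => /maxm; rewrite ltnn.
Qed.

Lemma prefixes_rcons T (P : seq T -> Prop) u y :
  (forall i, (i < size u)%N -> P (take i u)) -> P u ->
  forall i, (i < size (rcons u y))%N -> P (take i (rcons u y)).
Proof.
move=> pu Pu i; rewrite size_rcons ltnS leq_eqVlt -cats1 => /orP[/eqP-> | iu].
  by rewrite take_size_cat.
by rewrite takel_cat ?(ltnW iu) //; apply: pu.
Qed.

Section ExpectedMistakes.
Variables (X : Type) (R : realType) (A : learner X R).
Hypothesis validA : valid_learner A.

Lemma exp_mistakes_ge0 h hist xs : 0 <= exp_mistakes A h hist xs.
Proof.
elim: xs hist => [|x xs IH] hist //=.
have [b1 _] := andP (natr_bool01 R (h x != true)).
have [b0 _] := andP (natr_bool01 R (h x != false)).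
by apply: convex_ge => //; apply: addr_ge0.
Qed.

Lemma exp_mistakes_le_size h hist xs : exp_mistakes A h hist xs <= (size xs)%:R.
Proof.
elim: xs hist => [|x xs IH] hist //=.
have [_ b1] := andP (natr_bool01 R (h x != true)).
have [_ b0] := andP (natr_bool01 R (h x != false)).
by apply: convex_le => //; rewrite -addn1 natrD addrC lerD.
Qed.

Lemma exp_mistakes_cat h hist xs ys :
  exp_mistakes A h hist xs <= exp_mistakes A h hist (xs ++ ys).
Proof.
elim: xs hist => [|x xs IH] hist /=; first exact: exp_mistakes_ge0.
have [q0 q1] := andP (validA hist x).
by rewrite lerD // ler_wpM2l ?subr_ge0 // lerD2l.
Qed.

Lemma exp_mistakes_le_Mistakes T H h xs :
  H h -> size xs = T -> exp_mistakes A h [::] xs <= Mistakes A T H.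
Proof.
move=> Hh sxs; apply: ub_le_sup; last by exists h, xs.
by exists T%:R => _ [h' [xs' [_ [<- ->]]]]; apply: exp_mistakes_le_size.
Qed.

Lemma Mistakes_ge0 T H : 0 <= Mistakes A T H.
Proof.
have [[h [xs [Hh sxs]]]|none] := pselect (exists h (xs : seq X), H h /\ size xs = T).
  exact: le_trans (exp_mistakes_ge0 _ _ _) (exp_mistakes_le_Mistakes Hh sxs).
rewrite /Mistakes sup_out // => -[[_ [h [xs [Hh [sxs _]]]]] _].
by apply: none; exists h, xs.
Qed.

Lemma exp_mistakes_le_Mistakes_leq T H h xs :
  H h -> (size xs <= T)%N -> exp_mistakes A h [::] xs <= Mistakes A T H.
Proof.
case: xs => [|x xs] Hh sxs; first exact: Mistakes_ge0.
apply: le_trans (exp_mistakes_cat _ _ _ (nseq (T - size (x :: xs)) x)) _.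
by apply: exp_mistakes_le_Mistakes Hh _; rewrite size_cat size_nseq subnKC.
Qed.

End ExpectedMistakes.

Section RandomizedAdversary.
Variables (X : Type) (R : realType).

(* [Mix p a0 a1] runs [a1] with probability [p] and [a0] otherwise. *)
Inductive adversary :=
| Play of (X -> bool) & seq X
| Present of X & bool & adversary
| Mix of R & adversary & adversary.

Fixpoint all_scenarios (P : (X -> bool) -> seq X -> Prop) (a : adversary) : Prop :=
  match a with
  | Play h xs => P h xs
  | Present x _ a' => all_scenarios (fun h xs => P h (x :: xs)) a'
  | Mix _ a0 a1 => all_scenarios P a0 /\ all_scenarios P a1
  end.

Fixpoint expectation (f : (X -> bool) -> seq X -> R) (a : adversary) : R :=
  match a with
  | Play h xs => f h xs
  | Present x _ a' => expectation (fun h xs => f h (x :: xs)) a'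
  | Mix p a0 a1 => p * expectation f a1 + (1 - p) * expectation f a0
  end.

Fixpoint well_formed (a : adversary) : Prop :=
  match a with
  | Play _ _ => True
  | Present x y a' => all_scenarios (fun h _ => h x = y) a' /\ well_formed a'
  | Mix p a0 a1 => 0 <= p <= 1 /\ well_formed a0 /\ well_formed a1
  end.

Fixpoint adv_value (A : learner X R) (hist : seq (round_obs X)) (a : adversary) : R :=
  match a with
  | Play h xs => exp_mistakes A h hist xs
  | Present x y a' =>
      A hist x * ((y != true)%:R + adv_value A (rcons hist (x, true, Some y)) a')
      + (1 - A hist x) * ((y != false)%:R + adv_value A (rcons hist (x, false, None)) a')
  | Mix p a0 a1 => p * adv_value A hist a1 + (1 - p) * adv_value A hist a0
  end.

Lemma sub_all_scenarios (P Q : (X -> bool) -> seq X -> Prop) a :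
  (forall h xs, P h xs -> Q h xs) -> all_scenarios P a -> all_scenarios Q a.
Proof.
elim: a P Q => [h xs|x y a IH|p a0 IH0 a1 IH1] P Q PQ /=; first exact: PQ.
- by apply: IH => h xs; apply: PQ.
- by case=> aP0 aP1; split; [apply: IH0 aP0 | apply: IH1 aP1].
Qed.

Lemma all_scenarios_iter_Present P x y n a :
  all_scenarios P (iter n (Present x y) a)
  = all_scenarios (fun h xs => P h (nseq n x ++ xs)) a.
Proof. by elim: n P => [|n IH] P //=; rewrite IH. Qed.

Lemma well_formed_iter_Present x y n a :
  well_formed a -> all_scenarios (fun h _ => h x = y) a ->
  well_formed (iter n (Present x y) a).
Proof.
move=> wf agree; elim: n => [|n IH] //=.
by split => //; rewrite all_scenarios_iter_Present.
Qed.

Lemma eq_expectation f g a :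
  all_scenarios (fun h xs => f h xs = g h xs) a -> expectation f a = expectation g a.
Proof.
elim: a f g => [h xs|x y a IH|p a0 IH0 a1 IH1] f g /=; first by [].
- exact: IH.
- by case=> /IH0 -> /IH1 ->.
Qed.

Lemma expectation_affine (c0 c1 c2 : R) f g a :
  expectation (fun h xs => c0 + c1 * f h xs + c2 * g h xs) a
  = c0 + c1 * expectation f a + c2 * expectation g a.
Proof.
elim: a f g => [h xs|x y a IH|p a0 IH0 a1 IH1] f g /=.
- by [].
- exact: IH.
- by rewrite IH0 IH1; ring.
Qed.

Lemma expectation_le_scenario P f a :
  well_formed a -> all_scenarios P a ->
  exists h xs, P h xs /\ expectation f a <= f h xs.
Proof.
elim: a P f => [h xs|x y a IH|p a0 IH0 a1 IH1] P f /=.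
- by move=> _ Phxs; exists h, xs.
- move=> [_ wf] /(IH _ (fun h xs => f h (x :: xs)) wf) [h [xs [Phxs le]]].
  by exists h, (x :: xs).
- move=> [p01 [wf0 wf1]] [/(IH0 _ f wf0) [h0 [xs0 [P0 le0]]] /(IH1 _ f wf1) [h1 [xs1 [P1 le1]]]].
  have [f01|f10] := lerP (f h0 xs0) (f h1 xs1).
  + exists h1, xs1; split => //; apply: convex_le => //; exact: le_trans f01.
  + exists h0, xs0; split => //; apply: convex_le => //; exact: le_trans (ltW f10).
Qed.

Lemma adv_value_expectation A a : well_formed a ->
  forall hist, adv_value A hist a = expectation (fun h xs => exp_mistakes A h hist xs) a.
Proof.
elim: a => [h xs|x y a IH|p a0 IH0 a1 IH1] /=.
- by [].
- move=> [agree wf] hist; rewrite !IH //.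
  set q := A hist x.
  rewrite -[RHS](@eq_expectation (fun h xs => (q * (y != true)%:R + (1 - q) * (y != false)%:R)
      + q * exp_mistakes A h (rcons hist (x, true, Some y)) xs
      + (1 - q) * exp_mistakes A h (rcons hist (x, false, None)) xs)).
    by rewrite expectation_affine; ring.
  by apply: sub_all_scenarios agree => h xs /= ->; ring.
- by move=> [_ [wf0 wf1]] hist; rewrite IH0 // IH1.
Qed.

Lemma adv_value_le_scenario A P a hist :
  well_formed a -> all_scenarios P a ->
  exists h xs, P h xs /\ adv_value A hist a <= exp_mistakes A h hist xs.
Proof. by move=> wf; rewrite adv_value_expectation //; apply: expectation_le_scenario. Qed.

End RandomizedAdversary.

Arguments Play {X R}.
Arguments Present {X R}.
Arguments Mix {X R}.

Section AdversaryValueBounds.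
Variables (X : Type) (R : realType) (A : learner X R).
Hypothesis validA : valid_learner A.

Lemma adv_value_iter_ge x y a B :
  (forall hist, B <= adv_value A hist a) ->
  forall n hist, B <= adv_value A hist (iter n (Present x y) a).
Proof.
move=> aB; elim=> [|n IH] hist //=.
have [b1 _] := andP (natr_bool01 R (y != true)).
have [b0 _] := andP (natr_bool01 R (y != false)).
by apply: convex_ge; rewrite ?validA // ler_wpDl.
Qed.

(* A learner that keeps predicting 0 on the [n] copies of [x] pays [n p] on
   label 1; once it predicts 1 it pays [1 - p] on label 0. *)
Lemma adv_value_block_ge x (p : R) a0 a1 B0 B1 :
  0 <= p <= 1 ->
  (forall hist, B0 <= adv_value A hist a0) -> (forall hist, B1 <= adv_value A hist a1) ->
  forall n c hist, c <= n%:R * p -> c <= 1 - p ->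
  p * B1 + (1 - p) * B0 + c
  <= adv_value A hist (Mix p (iter n (Present x false) a0) (iter n (Present x true) a1)).
Proof.
move=> /andP[p0 p1] aB0 aB1; elim=> [|n IH] c hist cnp c1p.
  rewrite mul0r in cnp; have := aB0 hist; have := aB1 hist; rewrite /=; nra.
set hist1 := rcons hist (x, true, Some true).
set hist0 := rcons hist (x, true, Some false).
set histN := rcons hist (x, false, None).
set q := A hist x.
have -> : adv_value A hist (Mix p (iter n.+1 (Present x false) a0)
                                   (iter n.+1 (Present x true) a1))
  = q * (p * adv_value A hist1 (iter n (Present x true) a1)
         + (1 - p) * (1 + adv_value A hist0 (iter n (Present x false) a0)))
    + (1 - q) * (p + adv_value A histN (Mix p (iter n (Present x false) a0)
                                          (iter n (Present x true) a1))).
  by rewrite /= !mulr0n !mulr1n -/hist1 -/hist0 -/histN -/q; ring.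
apply: convex_ge; first exact: validA.
- have := adv_value_iter_ge x true aB1 n hist1.
  have := adv_value_iter_ge x false aB0 n hist0; nra.
- rewrite -addn1 natrD in cnp.
  have := IH (c - p) histN ltac:(lra) ltac:(lra); lra.
Qed.

End AdversaryValueBounds.

Section ShatteredTrees.
Variables (X : Type) (H : set (X -> bool)) (tree : seq bool -> X).

Definition realizes (h : X -> bool) (v : seq bool) :=
  forall i, (i < size v)%N -> h (tree (take i v)) = nth false v i.

Lemma realizes_catl h u s : realizes h (u ++ s) -> realizes h u.
Proof.
move=> hus i iu; have := hus i; rewrite size_cat takel_cat ?(ltnW iu) // nth_cat iu.
by apply; rewrite ltn_addr.
Qed.

Lemma realizes_rcons h u y : realizes h (rcons u y) -> h (tree u) = y.
Proof.
move=> /(_ (size u)); rewrite size_rcons -cats1 take_size_cat // nth_cat ltnn subnn.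
exact.
Qed.

(* Appending zeros to [v] reaches a path. *)
Lemma shattered_realizes w d v :
  shattered H w d tree -> (forall i, (i < size v)%N -> internal w d (take i v)) ->
  exists2 h, H h & realizes h v.
Proof.
move=> sh pv; case: (boolP (internal w d v)) => [/andP[vd vw] | vext]; last first.
  by have [h [Hh hv]] := sh v (conj pv vext); exists h.
set z := nseq (d - size v) false.
have [|h [Hh hvz]] := sh (v ++ z); last by exists h => //; apply: realizes_catl hvz.
split; last by rewrite /internal size_cat size_nseq subnKC ?ltnn // (ltnW vd).
move=> i; rewrite size_cat size_nseq take_cat.
case: (ltnP i (size v)) => [iv _|vi ivz]; first exact: pv.
rewrite /internal /z take_nseq; last lia.
by rewrite size_cat size_nseq count_cat count_nseq mul0n addn0 vw andbT; lia.
Qed.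

Lemma shattered_mono w d k D :
  (k <= w)%N -> (D <= d)%N -> shattered H w d tree -> shattered H k D tree.
Proof.
move=> kw Dd sh v [pv _].
have [h Hh hv] : exists2 h, H h & realizes h v.
  by apply: shattered_realizes sh _ => i /pv /andP[iD ik]; apply/andP; split; lia.
by exists h.
Qed.

Definition realizer (v : seq bool) : X -> bool :=
  xget (fun=> false) [set h | H h /\ realizes h v].

Lemma realizerP w d v :
  shattered H w d tree -> is_path w d v -> H (realizer v) /\ realizes (realizer v) v.
Proof. by move=> sh /sh hv; exact: (xgetPex (fun=> false) hv). Qed.

End ShatteredTrees.

Section ALAdversary.
Variables (X : Type) (R : realType) (H : set (X -> bool)) (tree : seq bool -> X).
Variables (k D m : nat) (p : R).

(* [n] is the remaining depth [D - size u], so the leaves are exactly the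
   paths of an AL tree of width [k] and depth [D]. *)
Fixpoint al_adversary (n : nat) (u : seq bool) : adversary X R :=
  if n is n'.+1 then
    if (count id u < k)%N then
      Mix p (iter m (Present (tree u) false) (al_adversary n' (rcons u false)))
            (iter m (Present (tree u) true) (al_adversary n' (rcons u true)))
    else Play (realizer H tree u) [::]
  else Play (realizer H tree u) [::].

Definition al_scenario (n : nat) (u : seq bool) (h : X -> bool) (xs : seq X) :=
  exists2 s, (size s <= n)%N & [/\ H h, realizes tree h (u ++ s) & size xs = (m * size s)%N].

Lemma internal_prefixes_rcons n u y :
  (count id u < k)%N -> (size u + n.+1 = D)%N ->
  (forall i, (i < size u)%N -> internal k D (take i u)) ->
  forall i, (i < size (rcons u y))%N -> internal k D (take i (rcons u y)).
Proof.
move=> uk uD pu; apply: (@prefixes_rcons _ (fun v => internal k D v)) pu _.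
by rewrite /internal uk andbT; lia.
Qed.

Hypothesis shattered_tree : shattered H k D tree.

Lemma al_scenario_leaf n u :
  is_path k D u -> all_scenarios (al_scenario n u) (@Play X R (realizer H tree u) [::]).
Proof.
by move=> /(realizerP shattered_tree) [Hh hu]; exists [::]; rewrite ?cats0 ?muln0.
Qed.

Lemma al_adversary_scenarios n u :
  (size u + n = D)%N -> (forall i, (i < size u)%N -> internal k D (take i u)) ->
  all_scenarios (al_scenario n u) (al_adversary n u).
Proof.
elim: n u => [|n IH] u uD pu /=.
  by apply: al_scenario_leaf; split; rewrite // /internal -uD addn0 ltnn.
case: ifP => uk; last by apply: al_scenario_leaf; split; rewrite // /internal uk andbF.
have uD' y : (size (rcons u y) + n = D)%N by rewrite size_rcons addSnnS.
have child y : all_scenarios (fun h xs => al_scenario n.+1 u h (nseq m (tree u) ++ xs))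
                             (al_adversary n (rcons u y)).
  apply: sub_all_scenarios (IH _ (uD' y) (internal_prefixes_rcons uk uD pu)).
  move=> h xs [s sn [Hh hs sxs]].
  exists (y :: s); rewrite // -cat_rcons.
  by split; rewrite // size_cat size_nseq sxs mulnS.
by rewrite /= !all_scenarios_iter_Present; split; apply: child.
Qed.

Lemma al_adversary_well_formed n u :
  0 <= p <= 1 ->
  (size u + n = D)%N -> (forall i, (i < size u)%N -> internal k D (take i u)) ->
  well_formed (al_adversary n u).
Proof.
move=> p01; elim: n u => [|n IH] u uD pu //=.
case: ifP => uk //.
have uD' y : (size (rcons u y) + n = D)%N by rewrite size_rcons addSnnS.
have pu' y := internal_prefixes_rcons (y := y) uk uD pu.
have child y : well_formed (iter m (Present (tree u) y) (al_adversary n (rcons u y))).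
  apply: well_formed_iter_Present; first exact: IH (uD' y) (pu' y).
  apply: sub_all_scenarios (al_adversary_scenarios (uD' y) (pu' y)).
  by move=> h xs [s _ [_ /realizes_catl/realizes_rcons ->]].
by split; [|split; apply: child].
Qed.

Section Potential.
Variable A : learner X R.
Hypothesis validA : valid_learner A.
Hypotheses (p_ge0 : 0 <= p) (p_le : m.+1%:R * p <= 1).

Let p01 : 0 <= p <= 1.
Proof. by rewrite p_ge0 /=; have := p_le; rewrite -addn1 natrD; have := ler0n R m; nra. Qed.

(* One step down lowers the potential by [m p] in expectation, which is
   exactly the gain of the block presented at [u]. *)
Lemma al_adversary_value_ge n u hist :
  p * n%:R <= k%:R ->
  m%:R / 2 * (p * n%:R - (count id u)%:R) <= adv_value A hist (al_adversary n u).
Proof.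
have m2 : 0 <= m%:R / 2 :> R by rewrite divr_ge0.
elim: n u hist => [|n IH] u hist pnk.
  apply: le_trans (exp_mistakes_ge0 validA (realizer H tree u) hist [::]).
  by rewrite mulr0 sub0r mulrN oppr_le0 mulr_ge0.
have pnk' : p * n%:R <= k%:R.
  by apply: le_trans pnk; rewrite ler_wpM2l // ler_nat.
rewrite [al_adversary _ _]/=; case: ifP => uk; last first.
  apply: le_trans (exp_mistakes_ge0 validA _ _ _); apply: mulr_ge0_le0 => //.
  by rewrite subr_le0 (le_trans pnk) // ler_nat leqNgt uk.
set B := fun y : bool => m%:R / 2 * (p * n%:R - (count id (rcons u y))%:R).
have IHy (y : bool) hist' : B y <= adv_value A hist' (al_adversary n (rcons u y)) :=
  IH (rcons u y) hist' pnk'.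
apply: le_trans (adv_value_block_ge validA (tree u) p01 (IHy false) (IHy true) hist
                   (lexx (m%:R * p)) _); last first.
  by have := p_le; rewrite -addn1 natrD mulrDl mul1r; lra.
have cnt y : (count id (rcons u y))%:R = (count id u)%:R + (y : nat)%:R :> R.
  by rewrite -cats1 count_cat /= addn0 natrD.
have -> : m%:R / 2 * (p * n.+1%:R - (count id u)%:R)
          = p * B true + (1 - p) * B false + m%:R * p.
  by rewrite /B !cnt -addn1 natrD /= mulr1n mulr0n; field.
by [].
Qed.

Lemma al_adversary_mistakes :
  p * D%:R <= k%:R ->
  exists h xs,
    [/\ H h, (size xs <= m * D)%N & m%:R / 2 * (p * D%:R) <= exp_mistakes A h [::] xs].
Proof.
move=> pDk.
have no_prefix : forall i, (i < size (@nil bool))%N -> internal k D (take i [::]) by [].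
have [h [xs [[s sD [Hh _ sxs]] le]]] :=
  adv_value_le_scenario A [::]
    (al_adversary_well_formed (n := D) (u := [::]) p01 erefl no_prefix)
    (al_adversary_scenarios (n := D) (u := [::]) erefl no_prefix).
exists h, xs; split => //; first by rewrite sxs leq_mul2l sD orbT.
by apply: le_trans le; have := al_adversary_value_ge [::] [::] pDk; rewrite subr0.
Qed.

End Potential.

End ALAdversary.

Lemma ominn_le K o : (ominn K o <= K)%N.
Proof. by case: o => [d|] //=; rewrite geq_minl. Qed.

Lemma largest_ge (P : nat -> Prop) K n :
  (0 < n)%N -> (n <= ominn K (largest P))%N -> exists2 d, (n <= d)%N & P d.
Proof.
move=> n0; rewrite /largest; case: asboolP => [_|unbounded] /=.
  case: xgetP => [d _ [Pd _] nd|_]; first by exists d => //; apply: leq_trans nd (geq_minr _ _).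
  by rewrite minn0 leqn0 => /eqP n_0; rewrite n_0 in n0.
move=> _; have [//|none] := pselect (exists2 d, (n <= d)%N & P d).
case: unbounded; exists n => d Pd; rewrite leqNgt; apply/negP => nd.
by apply: none; exists d => //; apply: ltnW.
Qed.

Section LowerBound.
Variables (X : Type) (R : realType) (A : learner X R).
Hypothesis validA : valid_learner A.

Lemma Mistakes_ge_shattered T H w d tree k D m :
  shattered H w d tree ->
  (0 < k <= w)%N -> (D <= d)%N -> (m * D <= T)%N -> (m.+1 * k <= 2 * D)%N ->
  (m * k)%:R / 4 <= Mistakes A T H.
Proof.
move=> sh /andP[k0 kw] Dd mDT mkD.
have D0 : (0 : R) < D%:R by rewrite ltr0n; nia.
set p : R := k%:R / (2 * D%:R).
have pD : p * D%:R = k%:R / 2 by rewrite /p; field; rewrite gt_eqF.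
have p_ge0 : 0 <= p by rewrite /p divr_ge0 ?mulr_ge0 // ltW.
have p_le : m.+1%:R * p <= 1.
  by rewrite /p mulrA ler_pdivrMr ?mulr_gt0 // mul1r -natrM -natrM ler_nat.
have pDk : p * D%:R <= k%:R by rewrite pD; have := ler0n R k; lra.
have [h [xs [Hh sxs le]]] :=
  al_adversary_mistakes (shattered_mono kw Dd sh) validA p_ge0 p_le pDk.
have -> : (m * k)%:R / 4 = m%:R / 2 * (p * D%:R) :> R by rewrite pD natrM; field.
exact: le_trans le (exp_mistakes_le_Mistakes_leq validA Hh (leq_trans sxs mDT)).
Qed.

Lemma sqrt_dims_le_Mistakes H T w :
  (0 < w)%N ->
  Num.sqrt ((ominn (minn w T) (Ldim H))%:R * (ominn T (ALdim H w))%:R) <= 8 * Mistakes A T H.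
Proof.
move=> w0.
set a := ominn (minn w T) (Ldim H); set b := ominn T (ALdim H w).
have aw : (a <= w)%N by apply: leq_trans (ominn_le _ _) (geq_minl _ _).
have aT : (a <= T)%N by apply: leq_trans (ominn_le _ _) (geq_minr _ _).
have bT : (b <= T)%N by apply: ominn_le.
have [mk abmk mkM] : exists2 mk : nat, (a * b <= (2 * mk) ^ 2)%N & mk%:R / 4 <= Mistakes A T H.
  have [a0|a0] := posnP a.
    by exists 0%N; rewrite ?a0 ?mul0r ?Mistakes_ge0.
  have [d ad [tr sh]] :=
    largest_ge (P := fun d => exists tree, shattered H d d tree) a0 (leqnn a).
  have [b4a|a4b] := leqP b (4 * a).
    exists (1 * a)%N; first nia.
    by apply: (Mistakes_ge_shattered sh _ ad); rewrite ?a0 ?ad ?mul1n.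
  have b0 : (0 < b)%N by lia.
  have [d' bd' [tr' sh']] :=
    largest_ge (P := fun d => exists tree, shattered H w d tree) b0 (leqnn b).
  have [|m m0 /andP[amb bam]] := mul_sqr_bracket (a := a) (b := b); first lia.
  exists (m * a)%N; first nia.
  have amD : (a * m <= b %/ m)%N by rewrite leq_divRL //; nia.
  apply: (Mistakes_ge_shattered sh' _ (leq_trans (leq_div b m) bd')).
  - by rewrite a0.
  - by rewrite mulnC (leq_trans (leq_divM b m) bT).
  - nia.
rewrite -natrM; apply: le_trans (sqrt_natr_le _ abmk) _.
by rewrite natrM; have := mkM; lra.
Qed.

End LowerBound.

Theorem lemma5 (R : realType) (X : Type) (H : set (X -> bool)) (T : nat) :
  inf [set Mistakes A T H | A in [set A : learner X R | valid_learner A]]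
  >= 8^-1 * sup [set Num.sqrt ((ominn (minn w T) (Ldim H))%:R
                               * (ominn T (ALdim H w))%:R)
                | w in [set w : nat | (0 < w)%N]].
Proof.
set M := [set Mistakes A T H | A in _]; set S := [set Num.sqrt _ | w in _].
have M0 : M !=set0.
  by exists (Mistakes (fun _ _ => 0 : R) T H), (fun _ _ => 0) => // ? ?; rewrite lexx ler01.
have S0 : S !=set0.
  by exists (Num.sqrt ((ominn (minn 1 T) (Ldim H))%:R * (ominn T (ALdim H 1))%:R)), 1%N.
suff : sup S <= 8 * inf M by lra.
apply: ge_sup S0 _ => _ [w w0 <-]; set s := Num.sqrt _.
suff : 8^-1 * s <= inf M by lra.
apply: lb_le_inf M0 _ => _ [A validA <-].
by have := sqrt_dims_le_Mistakes validA H T w0; rewrite -/s; lra.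
Qed.
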